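(* Let $\alpha,\beta,\gamma$ be partitions with $\alpha_1\le2$ and let $\Gamma$ be an LR-tableau of type $(\alpha,\beta,\gamma)$ such that every row of $\Gamma$ contains at most one (non-empty) box. Let $\Delta,\Delta'\in\mathcal D_\Gamma$. Then $\Delta'\to\Delta$ (i.e. $\Delta'<_{\rm arc}\Delta$ and there is no $\Delta''\in\mathcal D_\Gamma$ with $\Delta'<_{\rm arc}\Delta''<_{\rm arc}\Delta$) if and only if $\Delta'$ is obtained from $\Delta$ by a single move of type (A) or (B) which reduces the number of crossings by one.
   Context: For a partition $\lambda$, $\lambda'$ is its conjugate; the diagram of $\lambda$ is drawn with $\lambda'_i$ boxes in row $i$, so the $i$-th row of $\beta\setminus\gamma$ consists of the boxes in columns $\gamma'_i+1,\dots,\beta'_i$. With $\alpha_1\le 2$, $\alpha'=(\alpha'_1,\alpha'_2)$. An LR-tableau of type $(\alpha,\beta,\gamma)$ is a filling of $\beta\setminus\gamma$ with $\alpha'_1$ entries $1$ and $\alpha'_2$ entries $2$, weakly increasing along rows, strictly increasing down columns, such that for each $c\ge0$ the number of entries $1$ in columns to the right of column $c$ is at least the number of entries $2$ there. Place the positive integers on a line in decreasing order from left to right. An arc is a pair $(m,n)$, $m>n$ positive integers (source $m$, target $n$); a pole at $n$ is regarded as an arc $(\infty,n)$. An arc diagram of type $(\alpha,\beta,\gamma)$ is a finite multiset of $\alpha'_2$ arcs and $\alpha'_1-\alpha'_2$ poles with, for each $i$, exactly $\beta'_i-\gamma'_i$ members having source or target $i$. It has LR type $\Gamma$ if for each $i$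 the number of arcs with source $i$ equals the number of entries $2$ in row $i$ of $\Gamma$; $\mathcal D_\Gamma$ is the set of such diagrams. Members $(m,n),(k,r)$ cross iff $r<n<k<m$ or $n<r<m<k$; the number of crossings is the number of crossing pairs. Moves: for $a>b>c>d$, (A) replaces arcs $(a,c),(b,d)$ by $(a,d),(b,c)$; (C) replaces them by $(a,b),(c,d)$; for $a>b>c$, (B) replaces arc $(a,c)$ and pole $(\infty,b)$ by arc $(a,b)$ and pole $(\infty,c)$; (D) replaces them by arc $(b,c)$ and pole $(\infty,a)$. $\Delta\le_{\rm arc}\Delta'$ iff $\Delta$ is obtained from $\Delta'$ by a finite (possibly empty) sequence of moves; $<_{\rm arc}$ is the strict relation. *)

From mathcomp Require Import all_boot.
Set Implicit Arguments. Unset Strict Implicit. Unset Printing Implicit Defensive.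

(* A partition is a weakly decreasing sequence of positive integers;
   lambda_j (1-based) is nth 0 lambda (j-1). *)
Definition is_partition (l : seq nat) : bool :=
  sorted geq l && all (fun x => 0 < x) l.

Definition conj (l : seq nat) (i : nat) : nat := count (fun x => i <= x) l.

(* box (i, j) = row i, column j; it lies in beta \ gamma iff
   i >= 1 and gamma'_i < j <= beta'_i *)
Definition in_skew (b g : seq nat) (x : nat * nat) : bool :=
  (0 < x.1) && (conj g x.1 < x.2 <= conj b x.1).

(* the (finite) list of boxes of beta \ gamma; rows and columns are bounded
   by |beta| = sumn beta *)
Definition boxes (b g : seq nat) : seq (nat * nat) :=
  [seq x <- [seq (i, j) | i <- iota 1 (sumn b), j <- iota 1 (sumn b)]
   | in_skew b g x].

(* A filling of beta \ gamma: a function on (row, column) pairs; only its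
   values on the boxes of beta \ gamma matter. *)
Definition filling := (nat * nat -> nat)%type.

(* LR-tableau of type (alpha, beta, gamma), with alpha_1 <= 2 so that
   alpha' = (alpha'_1, alpha'_2). *)
Definition is_LR_tableau (a b g : seq nat) (T : filling) : Prop :=
  (forall i, 0 < i -> conj g i <= conj b i) /\
  (forall x, x \in boxes b g -> (T x == 1) || (T x == 2)) /\
  count (fun x => T x == 1) (boxes b g) = conj a 1 /\
  count (fun x => T x == 2) (boxes b g) = conj a 2 /\
  (forall i j, in_skew b g (i, j) -> in_skew b g (i, j.+1) ->
     T (i, j) <= T (i, j.+1)) /\
  (forall i j, in_skew b g (i, j) -> in_skew b g (i.+1, j) ->
     T (i, j) < T (i.+1, j)) /\
  (forall c, count (fun x => (c < x.2) && (T x == 2)) (boxes b g)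
             <= count (fun x => (c < x.2) && (T x == 1)) (boxes b g)).

Definition twos_in_row (b g : seq nat) (T : filling) (i : nat) : nat :=
  count (fun x => (x.1 == i) && (T x == 2)) (boxes b g).

(* A member is (source, target); source None stands for infinity (a pole). *)
Definition member := (option nat * nat)%type.

Definition is_arc (x : member) : bool := if x.1 is Some _ then true else false.
Definition is_pole (x : member) : bool := ~~ is_arc x.

Definition wf_member (x : member) : bool :=
  (0 < x.2) && (if x.1 is Some m then x.2 < m else true).

(* A finite multiset of members is represented by a sequence; two sequences
   represent the same multiset iff they are perm_eq. All notions below are
   invariant under perm_eq. *)
Definition arc_diagram := seq member.

Definition is_arc_diagram (a b g : seq nat) (D : arc_diagram) : Prop :=
  all wf_member D /\
  count is_arc D = conj a 2 /\
  count is_pole D = conj a 1 - conj a 2 /\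
  (forall i, 0 < i ->
     count (fun x => (x.1 == Some i) || (x.2 == i)) D = conj b i - conj g i).

Definition has_LR_type (b g : seq nat) (T : filling) (D : arc_diagram) : Prop :=
  forall i, 0 < i -> count (fun x => x.1 == Some i) D = twos_in_row b g T i.

Definition in_DGamma (a b g : seq nat) (T : filling) (D : arc_diagram) : Prop :=
  is_arc_diagram a b g D /\ has_LR_type b g T D.

Definition ltx (u v : option nat) : bool :=
  match u, v with
  | Some p, Some q => p < q
  | Some _, None => true
  | None, _ => false
  end.

Definition cross (x y : member) : bool :=
  let: (m, n) := x in let: (k, r) := y in
  (ltx (Some r) (Some n) && ltx (Some n) k && ltx k m) ||
  (ltx (Some n) (Some r) && ltx (Some r) m && ltx m k).

Fixpoint crossings (D : arc_diagram) : nat :=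
  if D is x :: D' then count (cross x) D' + crossings D' else 0.

Inductive move_kind := MoveA | MoveB | MoveC | MoveD.

Definition arc_move_of (k : move_kind) (Dold Dnew : arc_diagram) : Prop :=
  match k with
  | MoveA => exists a b c d rest, 0 < d /\ d < c /\ c < b /\ b < a /\
       perm_eq Dold ((Some a, c) :: (Some b, d) :: rest) /\
       perm_eq Dnew ((Some a, d) :: (Some b, c) :: rest)
  | MoveC => exists a b c d rest, 0 < d /\ d < c /\ c < b /\ b < a /\
       perm_eq Dold ((Some a, c) :: (Some b, d) :: rest) /\
       perm_eq Dnew ((Some a, b) :: (Some c, d) :: rest)
  | MoveB => exists a b c rest, 0 < c /\ c < b /\ b < a /\
       perm_eq Dold ((Some a, c) :: (None, b) :: rest) /\
       perm_eq Dnew ((Some a, b) :: (None, c) :: rest)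
  | MoveD => exists a b c rest, 0 < c /\ c < b /\ b < a /\
       perm_eq Dold ((Some a, c) :: (None, b) :: rest) /\
       perm_eq Dnew ((Some b, c) :: (None, a) :: rest)
  end.

Definition arc_move (Dold Dnew : arc_diagram) : Prop :=
  exists k, arc_move_of k Dold Dnew.

Inductive arc_le : arc_diagram -> arc_diagram -> Prop :=
| arc_le_refl D D' : perm_eq D D' -> arc_le D D'
| arc_le_step D D1 D' : arc_move D1 D -> arc_le D1 D' -> arc_le D D'.

Definition arc_lt (D D' : arc_diagram) : Prop := arc_le D D' /\ ~~ perm_eq D D'.

Definition arc_cover (a b g : seq nat) (T : filling) (D' D : arc_diagram) : Prop :=
  arc_lt D' D /\
  ~ (exists D'', in_DGamma a b g T D'' /\ arc_lt D' D'' /\ arc_lt D'' D).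

From mathcomp Require Import all_boot zify.
Set Implicit Arguments. Unset Strict Implicit. Unset Printing Implicit Defensive.

(* Moves A and B keep the multiset of sources, hence stay inside D_Gamma, and
   strictly decrease the number of crossings; moves C and D strictly decrease
   the sum of the sources, which is the same for all diagrams of D_Gamma.  So
   any chain of moves between two diagrams of D_Gamma consists of A and B
   moves only, and crossings strictly decrease along it.  Since every row of
   Gamma has at most one box, every point is an endpoint of at most one
   member; then an A or B move loses exactly one crossing, plus one or two for
   each member nested in a specific way between the exchanged endpoints, and
   every such member lets the move factor through two or three A and B moves,
   producing an intermediate diagram. *)

Ltac decide_order :=
  try (exfalso; lia); try done;
  match goal with
  | |- context [leq ?x ?y] => case: (leqP x y) => ?; decide_order
  end.

Ltac perm_shuffle := apply/permP => ? /=; lia.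

Definition incident (i : nat) (x : member) : bool := (x.1 == Some i) || (x.2 == i).

Lemma incident_arc i m n : incident i (Some m, n) = (m == i) || (n == i).
Proof. by []. Qed.

Lemma incident_pole i n : incident i (None, n) = (n == i).
Proof. by []. Qed.

Definition source (x : member) : nat := if x.1 is Some m then m else 0.

Definition source_sum (D : arc_diagram) : nat := sumn (map source D).

Definition sources_at (i : nat) (D : arc_diagram) : nat :=
  count (fun x : member => x.1 == Some i) D.

Definition simple_diagram (D : arc_diagram) : Prop :=
  all wf_member D /\ forall i, count (incident i) D <= 1.

Definition ab_move (X Y : arc_diagram) : Prop :=
  arc_move_of MoveA X Y \/ arc_move_of MoveB X Y.

Definition has_intermediate (a b g : seq nat) (T : filling) (D' D : arc_diagram) : Prop :=
  exists D'', in_DGamma a b g T D'' /\ arc_lt D' D'' /\ arc_lt D'' D.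

Lemma sumn_gt0 (T : eqType) (w : T -> nat) (s : seq T) :
  0 < sumn (map w s) -> exists2 x, x \in s & 0 < w x.
Proof.
elim: s => //= x s IHs; case: (posnP (w x)) => [-> /IHs [y ys wy] | wx _].
  by exists y; rewrite // in_cons ys orbT.
by exists x; rewrite ?mem_head.
Qed.

Lemma cross_sym x y : cross x y = cross y x.
Proof. by case: x => m n; case: y => k r /=; rewrite orbC. Qed.

Lemma cross_irr x : cross x x = false.
Proof. by case: x => [[m|] n] /=; rewrite ltnn. Qed.

Lemma double_crossings D : 2 * crossings D = sumn [seq count (cross x) D | x <- D].
Proof.
elim: D => //= x D IHD; rewrite cross_irr add0n.
have -> : [seq count (cross y) (x :: D) | y <- D] =
          [seq cross x y + count (cross y) D | y <- D].
  by apply: eq_map => y /=; rewrite cross_sym.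
have sumnD (f g : member -> nat) s :
    sumn [seq f y + g y | y <- s] = sumn (map f s) + sumn (map g s).
  by elim: s => //= y s ->; lia.
by rewrite sumnD sumn_count; lia.
Qed.

Lemma crossings_perm D E : perm_eq D E -> crossings D = crossings E.
Proof.
move=> DE; suff : 2 * crossings D = 2 * crossings E by lia.
rewrite !double_crossings (eq_map (g := fun x => count (cross x) E)); last first.
  by move=> x; apply/permP.
exact/perm_sumn/perm_map.
Qed.

Section Exchange.

Variables (X Y r : arc_diagram) (u v u' v' : member).
Hypotheses (defX : perm_eq X (u :: v :: r)) (defY : perm_eq Y (u' :: v' :: r)).

Lemma exchange_count (p : pred member) :
  p u + p v = p u' + p v' -> count p Y = count p X.
Proof. by move: defX defY => /permP -> /permP -> /=; lia. Qed.

Lemma exchange_crossings (w : member -> nat) :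
  {in r, forall x, cross u x + cross v x = cross u' x + cross v' x + w x} ->
  crossings X + cross u' v' = crossings Y + cross u v + sumn (map w r).
Proof.
rewrite (crossings_perm defX) (crossings_perm defY) /=.
elim: r => [|x s IHs] eq_r /=; first lia.
have := eq_r x (mem_head _ _).
have /IHs : {in s, forall y, cross u y + cross v y = cross u' y + cross v' y + w y}.
  by move=> y ys; apply: eq_r; rewrite in_cons ys orbT.
lia.
Qed.

Hypothesis simpleX : simple_diagram X.

Lemma exchange_rest_wf : {in r, forall x, wf_member x}.
Proof.
by case: simpleX => + _; rewrite (perm_all _ defX) => /and3P[_ _ /allP].
Qed.

Lemma exchange_rest_not_incident i :
  incident i u || incident i v -> {in r, forall x, ~~ incident i x}.
Proof.
move=> iuv x xr; apply/negP => ix; case: simpleX => _ /(_ i).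
move/permP: defX => -> /=.
have : 0 < count (incident i) r by rewrite -has_count; apply/hasP; exists x.
move: iuv; case: (incident i u); case: (incident i v) => //= _ pos;
  by rewrite ?add0n add1n ltnS leqn0 => /eqP c0; rewrite c0 in pos.
Qed.

End Exchange.

Ltac incidence_cases :=
  move=> i; rewrite ?incident_arc ?incident_pole; do ?[case: eqP => ? /=]; lia.

Lemma arc_move_exchange X Y : arc_move X Y -> exists u v u' v' r,
  [/\ perm_eq X (u :: v :: r), perm_eq Y (u' :: v' :: r), wf_member u' && wf_member v',
      forall i, incident i u + incident i v = incident i u' + incident i v'
    & is_arc u + is_arc v = is_arc u' + is_arc v'].
Proof.
case=> -[] /=.
- move=> [a [b [c [d [r [? [? [? [? [hX hY]]]]]]]]]].
  exists (Some a, c), (Some b, d), (Some a, d), (Some b, c), r.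
  by split=> //; [rewrite /wf_member /=; decide_order | incidence_cases].
- move=> [a [b [c [r [? [? [? [hX hY]]]]]]]].
  exists (Some a, c), (None, b), (Some a, b), (None, c), r.
  by split=> //; [rewrite /wf_member /=; decide_order | incidence_cases].
- move=> [a [b [c [d [r [? [? [? [? [hX hY]]]]]]]]]].
  exists (Some a, c), (Some b, d), (Some a, b), (Some c, d), r.
  by split=> //; [rewrite /wf_member /=; decide_order | incidence_cases].
- move=> [a [b [c [r [? [? [? [hX hY]]]]]]]].
  exists (Some a, c), (None, b), (Some b, c), (None, a), r.
  by split=> //; [rewrite /wf_member /=; decide_order | incidence_cases].
Qed.

Section MoveInvariants.

Variables X Y : arc_diagram.
Hypothesis XY : arc_move X Y.

Lemma arc_move_wf : all wf_member X -> all wf_member Y.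
Proof.
have [u [v [u' [v' [r [hX hY wf' _ _]]]]]] := arc_move_exchange XY.
by rewrite (perm_all _ hX) (perm_all _ hY); case/andP: wf' => /= -> -> /and3P[].
Qed.

Lemma arc_move_count_incident i : count (incident i) Y = count (incident i) X.
Proof.
have [u [v [u' [v' [r [hX hY _ inc _]]]]]] := arc_move_exchange XY.
exact: (exchange_count hX hY (inc i)).
Qed.

Lemma arc_move_count_arc : count is_arc Y = count is_arc X.
Proof.
have [u [v [u' [v' [r [hX hY _ _ arcs]]]]]] := arc_move_exchange XY.
exact: (exchange_count hX hY arcs).
Qed.

Lemma arc_move_count_pole : count is_pole Y = count is_pole X.
Proof.
have [u [v [u' [v' [r [hX hY _ _ arcs]]]]]] := arc_move_exchange XY.
apply: (exchange_count hX hY); move: arcs; rewrite /is_pole.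
by case: (is_arc u); case: (is_arc v); case: (is_arc u'); case: (is_arc v').
Qed.

Lemma arc_move_simple : simple_diagram X -> simple_diagram Y.
Proof.
by case=> wfX incX; split=> [|i]; rewrite ?arc_move_count_incident ?arc_move_wf.
Qed.

Lemma arc_move_arc_diagram a b g : is_arc_diagram a b g X -> is_arc_diagram a b g Y.
Proof.
case=> wfX [arcX [poleX incX]]; split; first exact: arc_move_wf.
rewrite arc_move_count_arc arc_move_count_pole; do 2!split=> //.
by move=> i i_gt0; have := arc_move_count_incident i; rewrite /incident => ->; apply: incX.
Qed.

End MoveInvariants.

Lemma simple_diagram_perm X Y : perm_eq X Y -> simple_diagram X -> simple_diagram Y.
Proof.
by move=> /[dup] /perm_all XY /permP cXY [wfX incX]; split=> [|i]; rewrite -?XY -?cXY.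
Qed.

Lemma arc_diagram_perm a b g X Y :
  perm_eq X Y -> is_arc_diagram a b g X -> is_arc_diagram a b g Y.
Proof.
move=> XY [wfX [arcX [poleX incX]]]; move/permP: (XY) => cXY.
split; first by rewrite -(perm_all _ XY).
by rewrite -!cXY; do 2!split=> //; move=> i /incX; rewrite cXY.
Qed.

Lemma arc_le_backward (P : arc_diagram -> Prop) :
  (forall X Y, perm_eq X Y -> P X -> P Y) -> (forall X Y, arc_move X Y -> P X -> P Y) ->
  forall X Y, arc_le X Y -> P Y -> P X.
Proof.
move=> Pperm Pmove X Y; elim=> {X Y} [X Y XY | X X1 Y X1X _ IH] PY.
  by apply: Pperm PY; rewrite perm_sym.
exact: Pmove X1X (IH PY).
Qed.

Lemma arc_le_simple X Y : arc_le X Y -> simple_diagram Y -> simple_diagram X.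
Proof. exact: (@arc_le_backward simple_diagram simple_diagram_perm arc_move_simple). Qed.

Lemma arc_le_arc_diagram a b g X Y :
  arc_le X Y -> is_arc_diagram a b g Y -> is_arc_diagram a b g X.
Proof.
by apply: arc_le_backward => [X' Y'|X' Y' XY']; [apply: arc_diagram_perm|apply: arc_move_arc_diagram].
Qed.

Lemma arc_diagram_simple a b g D :
  (forall i, 0 < i -> conj b i - conj g i <= 1) -> is_arc_diagram a b g D ->
  simple_diagram D.
Proof.
move=> rows [wfD [_ [_ incD]]]; split=> // -[|i]; last first.
  by rewrite /incident incD //; apply: rows.
suff -> : count (incident 0) D = 0 by [].
apply/eqP; rewrite -leqn0 leqNgt -has_count; apply/hasPn => -[[m|] n] /(allP wfD);
  by rewrite /wf_member ?incident_arc ?incident_pole /= !eqn_leq; decide_order.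
Qed.

Lemma ab_moveA X Y a b c d r : 0 < d -> d < c -> c < b -> b < a ->
  perm_eq X ((Some a, c) :: (Some b, d) :: r) -> perm_eq Y ((Some a, d) :: (Some b, c) :: r) ->
  ab_move X Y.
Proof. by move=> *; left; exists a, b, c, d, r. Qed.

Lemma ab_moveB X Y a b c r : 0 < c -> c < b -> b < a ->
  perm_eq X ((Some a, c) :: (None, b) :: r) -> perm_eq Y ((Some a, b) :: (None, c) :: r) ->
  ab_move X Y.
Proof. by move=> *; right; exists a, b, c, r. Qed.

Lemma ab_move_arc_move X Y : ab_move X Y -> arc_move X Y.
Proof. by case=> mv; eexists; exact: mv. Qed.

Lemma source_sum_perm X Y : perm_eq X Y -> source_sum X = source_sum Y.
Proof. by move=> XY; apply/perm_sumn/perm_map. Qed.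

Lemma source_sum_pmap D : source_sum D = sumn (pmap (fun x : member => x.1) D).
Proof. by rewrite /source_sum; elim: D => //= -[[m|] n] D /= ->. Qed.

Lemma count_mem_sources i D :
  count_mem i (pmap (fun x : member => x.1) D) = sources_at i D.
Proof. by rewrite /sources_at; elim: D => //= -[[m|] n] D /= ->. Qed.

Lemma source_sum_eq X Y :
  (forall i, sources_at i X = sources_at i Y) -> source_sum X = source_sum Y.
Proof.
move=> sXY; rewrite !source_sum_pmap; apply/perm_sumn/allP => i _.
by rewrite /= !count_mem_sources sXY.
Qed.

Lemma sources_at0 D : all wf_member D -> sources_at 0 D = 0.
Proof.
move=> wfD; apply/eqP; rewrite -leqn0 leqNgt -has_count.
by apply/hasPn => -[[m|] n] /(allP wfD) //=; rewrite /wf_member /=; case: m => //; lia.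
Qed.

Lemma ab_move_sources X Y i : ab_move X Y -> sources_at i Y = sources_at i X.
Proof.
by case=> [[a [b [c [d [r [_ [_ [_ [_ [hX hY]]]]]]]]]] | [a [b [c [r [_ [_ [_ [hX hY]]]]]]]]];
  apply: (exchange_count hX hY).
Qed.

Lemma ab_move_source_sum X Y : ab_move X Y -> source_sum Y = source_sum X.
Proof. by move=> XY; apply: source_sum_eq => i; apply: ab_move_sources. Qed.

Lemma arc_move_source_sum X Y : arc_move X Y -> ab_move X Y \/ source_sum Y < source_sum X.
Proof.
case=> -[] mv; [by left; left | by left; right | right | right].
- case: mv => [a [b [c [d [r [? [? [? [? [hX hY]]]]]]]]]].
  by rewrite (source_sum_perm hX) (source_sum_perm hY) /source_sum /source /=; lia.
- case: mv => [a [b [c [r [? [? [? [hX hY]]]]]]]].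
  by rewrite (source_sum_perm hX) (source_sum_perm hY) /source_sum /source /=; lia.
Qed.

Lemma arc_le_source_sum X Y : arc_le X Y -> source_sum X <= source_sum Y.
Proof.
elim=> {X Y} [X Y XY | X X1 Y X1X _ IH]; first by rewrite (source_sum_perm XY).
apply: leq_trans IH; case: (arc_move_source_sum X1X) => [/ab_move_source_sum -> //|].
exact: ltnW.
Qed.

Section LRType.

Variables (a b g : seq nat) (T : filling).

Lemma LR_type_source_sum X Y : all wf_member X -> all wf_member Y ->
  has_LR_type b g T X -> has_LR_type b g T Y -> source_sum X = source_sum Y.
Proof.
move=> wfX wfY LX LY; apply: source_sum_eq => -[|i]; first by rewrite !sources_at0.
by rewrite /sources_at LX // LY.
Qed.

Lemma ab_move_LR_type X Y : ab_move X Y -> has_LR_type b g T X <-> has_LR_type b g T Y.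
Proof.
move=> XY; have := ab_move_sources _ XY; rewrite /sources_at => sXY.
by split=> L i /L <-; rewrite sXY.
Qed.

Lemma ab_move_DGamma X Y : ab_move X Y -> in_DGamma a b g T X -> in_DGamma a b g T Y.
Proof.
move=> XY [AX LX]; split; first exact: (arc_move_arc_diagram (ab_move_arc_move XY)).
exact/(ab_move_LR_type XY).
Qed.

Lemma DGamma_source_sum X Y :
  in_DGamma a b g T X -> in_DGamma a b g T Y -> source_sum X = source_sum Y.
Proof. by case=> [[wfX _] LX] [[wfY _] LY]; apply: LR_type_source_sum. Qed.

End LRType.

(* A member [(m, n)] with [d < n < c] and [b < m < a] crosses both [(a, c)]
   and [(b, d)] but neither [(a, d)] nor [(b, c)]; any other member crosses
   as many of the old arcs as of the new ones. *)
Definition moveA_excess (a b c d : nat) (x : member) : nat :=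
  if x.1 is Some m then ((d < x.2 < c) && (b < m < a)) * 2 else 0.

(* Likewise for move B, a pole at [n] or an arc [(m, n)] with [a < m] and
   [c < n < b] is the only source of additional lost crossings. *)
Definition moveB_excess (a b c : nat) (x : member) : nat :=
  if c < x.2 < b then (if x.1 is Some m then (a < m) * 2 else 1) else 0.

Lemma cross_moveA a b c d x :
  0 < d -> d < c -> c < b -> b < a -> wf_member x ->
  ~~ incident a x -> ~~ incident b x -> ~~ incident c x -> ~~ incident d x ->
  cross (Some a, c) x + cross (Some b, d) x =
  cross (Some a, d) x + cross (Some b, c) x + moveA_excess a b c d x.
Proof.
case: x => [[m|] n]; rewrite ?incident_arc ?incident_pole /wf_member /moveA_excess /cross /ltx /=.
  move=> ? ? ? ? /andP[? ?] /norP[/eqP ? /eqP ?] /norP[/eqP ? /eqP ?]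
    /norP[/eqP ? /eqP ?] /norP[/eqP ? /eqP ?].
  by decide_order.
by move=> ? ? ? ? ? /eqP ? /eqP ? /eqP ? /eqP ?; decide_order.
Qed.

Lemma cross_moveB a b c x :
  0 < c -> c < b -> b < a -> wf_member x ->
  ~~ incident a x -> ~~ incident b x -> ~~ incident c x ->
  cross (Some a, c) x + cross (None, b) x =
  cross (Some a, b) x + cross (None, c) x + moveB_excess a b c x.
Proof.
case: x => [[m|] n]; rewrite ?incident_arc ?incident_pole /wf_member /moveB_excess /cross /ltx /=.
  move=> ? ? ? /andP[? ?] /norP[/eqP ? /eqP ?] /norP[/eqP ? /eqP ?] /norP[/eqP ? /eqP ?].
  by decide_order.
by move=> ? ? ? ? /eqP ? /eqP ? /eqP ?; decide_order.
Qed.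

Section MoveCrossings.

Variables (X Y r : arc_diagram).
Hypothesis simpleX : simple_diagram X.

Lemma crossings_moveA a b c d : 0 < d -> d < c -> c < b -> b < a ->
  perm_eq X ((Some a, c) :: (Some b, d) :: r) -> perm_eq Y ((Some a, d) :: (Some b, c) :: r) ->
  crossings X = crossings Y + 1 + sumn (map (moveA_excess a b c d) r).
Proof.
move=> d_gt0 dc cb ba hX hY.
have rest_wf := exchange_rest_wf hX simpleX.
have rest_inc i := exchange_rest_not_incident hX simpleX (i := i).
have := exchange_crossings hX hY (w := moveA_excess a b c d).
have -> : cross (Some a, c) (Some b, d) by rewrite /cross /ltx /=; decide_order.
have -> : cross (Some a, d) (Some b, c) = false by rewrite /cross /ltx /=; decide_order.
suff /[swap]/[apply] : {in r, forall x, cross (Some a, c) x + cross (Some b, d) x =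
    cross (Some a, d) x + cross (Some b, c) x + moveA_excess a b c d x} by lia.
move=> x xr; apply: cross_moveA; rewrite ?rest_wf //;
  by apply: rest_inc; rewrite ?incident_arc ?eqxx ?orbT.
Qed.

Lemma crossings_moveB a b c : 0 < c -> c < b -> b < a ->
  perm_eq X ((Some a, c) :: (None, b) :: r) -> perm_eq Y ((Some a, b) :: (None, c) :: r) ->
  crossings X = crossings Y + 1 + sumn (map (moveB_excess a b c) r).
Proof.
move=> c_gt0 cb ba hX hY.
have rest_wf := exchange_rest_wf hX simpleX.
have rest_inc i := exchange_rest_not_incident hX simpleX (i := i).
have := exchange_crossings hX hY (w := moveB_excess a b c).
have -> : cross (Some a, c) (None, b) by rewrite /cross /ltx /=; decide_order.
have -> : cross (Some a, b) (None, c) = false by rewrite /cross /ltx /=; decide_order.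
suff /[swap]/[apply] : {in r, forall x, cross (Some a, c) x + cross (None, b) x =
    cross (Some a, b) x + cross (None, c) x + moveB_excess a b c x} by lia.
move=> x xr; apply: cross_moveB; rewrite ?rest_wf //;
  by apply: rest_inc; rewrite ?incident_arc ?incident_pole ?eqxx ?orbT.
Qed.

End MoveCrossings.

Lemma ab_move_crossings X Y : simple_diagram X -> ab_move X Y -> crossings Y < crossings X.
Proof.
move=> sX [[a [b [c [d [r [? [? [? [? [hX hY]]]]]]]]]] | [a [b [c [r [? [? [? [hX hY]]]]]]]]].
  by rewrite (crossings_moveA sX _ _ _ _ hX hY) //; lia.
by rewrite (crossings_moveB sX _ _ _ hX hY) //; lia.
Qed.

Lemma arc_le_crossings X Y : arc_le X Y -> simple_diagram Y ->
  source_sum X = source_sum Y -> perm_eq X Y \/ crossings X < crossings Y.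
Proof.
elim=> {X Y} [X Y XY _ _ | X X1 Y X1X leX1Y IH sY sXY]; first by left.
have sX1 := arc_le_simple leX1Y sY.
have le_sum := arc_le_source_sum leX1Y.
case: (arc_move_source_sum X1X) => [ab_X1X | lt_sum]; last by lia.
have eq_sum := ab_move_source_sum ab_X1X.
have lt_X := ab_move_crossings sX1 ab_X1X.
by right; case: (IH sY ltac:(lia)) => [/crossings_perm|]; lia.
Qed.

Lemma arc_le_inv X Y : arc_le X Y -> perm_eq X Y \/ exists2 X1, arc_move X1 X & arc_le X1 Y.
Proof. by case=> [X' Y' XY | X' X1 Y' mv le]; [left | right; exists X1]. Qed.

Lemma arc_le_move X Y : arc_move Y X -> arc_le X Y.
Proof. by move=> mv; apply: arc_le_step mv (arc_le_refl (perm_refl Y)). Qed.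

Lemma ab_move_perm X X' Y : perm_eq X X' -> ab_move X Y -> ab_move X' Y.
Proof.
rewrite perm_sym => XX'.
case=> [[a [b [c [d [r [? [? [? [? [hX hY]]]]]]]]]] | [a [b [c [r [? [? [? [hX hY]]]]]]]]].
  exact: ab_moveA (perm_trans XX' hX) hY.
exact: ab_moveB (perm_trans XX' hX) hY.
Qed.

Lemma crossings_neq_perm X Y : crossings X != crossings Y -> ~~ perm_eq X Y.
Proof. by apply: contra => /crossings_perm ->. Qed.

Section Covers.

Variables (alpha beta gamma : seq nat) (T : filling).

Local Notation DGamma := (in_DGamma alpha beta gamma T).
Local Notation has_intermediate := (has_intermediate alpha beta gamma T).

Lemma ab_move_intermediate D D1 D' : DGamma D -> simple_diagram D ->
  ab_move D D1 -> arc_le D' D1 -> crossings D' < crossings D1 -> has_intermediate D' D.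
Proof.
move=> DD sD mv le lt; exists D1; split; first exact: ab_move_DGamma mv DD.
have lt1 := ab_move_crossings sD mv.
split; split.
- exact: le.
- by apply: crossings_neq_perm; rewrite neq_ltn lt.
- exact/arc_le_move/ab_move_arc_move.
- by apply: crossings_neq_perm; rewrite neq_ltn lt1.
Qed.

Variable D : arc_diagram.
Hypotheses (DD : DGamma D) (sD : simple_diagram D).

(* An arc nested under both exchanged arcs lets the move factor through
   three moves of type A. *)
Lemma moveA_excess_intermediate D' r a b c d x :
  0 < d -> d < c -> c < b -> b < a ->
  perm_eq D ((Some a, c) :: (Some b, d) :: r) -> perm_eq D' ((Some a, d) :: (Some b, c) :: r) ->
  x \in r -> 0 < moveA_excess a b c d x -> has_intermediate D' D.
Proof.
move=> d_gt0 dc cb ba hD hD' /perm_to_rem rx.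
case: x rx => [[q|] p] rx; rewrite /moveA_excess //= muln_gt0 lt0b andbT.
move=> /andP[/andP[dp pc] /andP[bq qa]].
move: (rem _ r) rx => r' rx.
have eD : perm_eq D ((Some a, c) :: (Some b, d) :: (Some q, p) :: r').
  by apply: perm_trans hD _; rewrite !perm_cons.
have eD' : perm_eq D' ((Some a, d) :: (Some b, c) :: (Some q, p) :: r').
  by apply: perm_trans hD' _; rewrite !perm_cons.
pose D1 := (Some a, p) :: (Some q, c) :: (Some b, d) :: r'.
pose D2 := (Some a, d) :: (Some b, p) :: (Some q, c) :: r'.
have mv1 : ab_move D D1.
  apply: (@ab_moveA _ _ a q c p ((Some b, d) :: r')); try lia;
    [apply: perm_trans eD _|]; perm_shuffle.
have mv2 : ab_move D1 D2.
  apply: (@ab_moveA _ _ a b p d ((Some q, c) :: r')); try lia;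
    perm_shuffle.
have mv3 : ab_move D2 D'.
  apply: (@ab_moveA _ _ q b c p ((Some a, d) :: r')); try lia;
    [|apply: perm_trans eD' _]; perm_shuffle.
apply: (ab_move_intermediate DD sD mv1).
  exact: arc_le_step (ab_move_arc_move mv3) (arc_le_move (ab_move_arc_move mv2)).
have sD1 := arc_move_simple (ab_move_arc_move mv1) sD.
have sD2 := arc_move_simple (ab_move_arc_move mv2) sD1.
exact: ltn_trans (ab_move_crossings sD2 mv3) (ab_move_crossings sD1 mv2).
Qed.

(* Such a member is either a pole, and the move factors as B, B, or an arc
   over [(a, c)], and the move factors as A, B, B. *)
Lemma moveB_excess_intermediate D' r a b c x :
  0 < c -> c < b -> b < a ->
  perm_eq D ((Some a, c) :: (None, b) :: r) -> perm_eq D' ((Some a, b) :: (None, c) :: r) ->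
  x \in r -> 0 < moveB_excess a b c x -> has_intermediate D' D.
Proof.
move=> c_gt0 cb ba hD hD' /perm_to_rem; move: (rem x r) => r' rx.
have eD : perm_eq D ((Some a, c) :: (None, b) :: x :: r').
  by apply: perm_trans hD _; rewrite !perm_cons.
have eD' : perm_eq D' ((Some a, b) :: (None, c) :: x :: r').
  by apply: perm_trans hD' _; rewrite !perm_cons.
case: x {rx} eD eD' => [[q|] p] eD eD'; rewrite /moveB_excess /=;
  case: ifP => // /andP[cp pb]; last first.
  move=> _.
  pose D1 := (Some a, p) :: (None, c) :: (None, b) :: r'.
  have mv1 : ab_move D D1.
    apply: (@ab_moveB _ _ a p c ((None, b) :: r')); try lia;
      [apply: perm_trans eD _|]; perm_shuffle.
  have mv2 : ab_move D1 D'.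
    apply: (@ab_moveB _ _ a b p ((None, c) :: r')); try lia;
      [|apply: perm_trans eD' _]; perm_shuffle.
  apply: (ab_move_intermediate DD sD mv1 (arc_le_move (ab_move_arc_move mv2))).
  exact: ab_move_crossings (arc_move_simple (ab_move_arc_move mv1) sD) mv2.
case: ltnP => // aq _.
pose D1 := (Some q, c) :: (Some a, p) :: (None, b) :: r'.
pose D2 := (Some a, b) :: (None, p) :: (Some q, c) :: r'.
have mv1 : ab_move D D1.
  apply: (@ab_moveA _ _ q a p c ((None, b) :: r')); try lia;
    [apply: perm_trans eD _|]; perm_shuffle.
have mv2 : ab_move D1 D2.
  apply: (@ab_moveB _ _ a b p ((Some q, c) :: r')); try lia;
    perm_shuffle.
have mv3 : ab_move D2 D'.
  apply: (@ab_moveB _ _ q p c ((Some a, b) :: r')); try lia;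
    [|apply: perm_trans eD' _]; perm_shuffle.
apply: (ab_move_intermediate DD sD mv1).
  exact: arc_le_step (ab_move_arc_move mv3) (arc_le_move (ab_move_arc_move mv2)).
have sD1 := arc_move_simple (ab_move_arc_move mv1) sD.
have sD2 := arc_move_simple (ab_move_arc_move mv2) sD1.
exact: ltn_trans (ab_move_crossings sD2 mv3) (ab_move_crossings sD1 mv2).
Qed.

Lemma ab_move_cover_crossings D' :
  ab_move D D' -> ~ has_intermediate D' D -> crossings D' + 1 = crossings D.
Proof.
case=> [[a [b [c [d [r [? [? [? [? [hD hD']]]]]]]]]] | [a [b [c [r [? [? [? [hD hD']]]]]]]]] no_mid.
  rewrite (crossings_moveA sD _ _ _ _ hD hD') //.
  case: (posnP (sumn (map (moveA_excess a b c d) r))) => [-> | /sumn_gt0 [x xr pos]]; first lia.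
  by case: no_mid; apply: moveA_excess_intermediate hD hD' xr pos.
rewrite (crossings_moveB sD _ _ _ hD hD') //.
case: (posnP (sumn (map (moveB_excess a b c) r))) => [-> | /sumn_gt0 [x xr pos]]; first lia.
by case: no_mid; apply: moveB_excess_intermediate hD hD' xr pos.
Qed.

End Covers.

Section SingleBoxRows.

Variables (alpha beta gamma : seq nat) (T : filling).
Hypothesis rows : forall i, 0 < i -> conj beta i - conj gamma i <= 1.

Local Notation DGamma := (in_DGamma alpha beta gamma T).

Lemma DGamma_simple D : DGamma D -> simple_diagram D.
Proof. by case=> AD _; apply: arc_diagram_simple AD. Qed.

(* Moves C and D lower the source sum, which is constant on [D_Gamma], so
   the last move of a chain below [D] is of type A or B; if it does not
   start at [D], its start is an intermediate diagram. *)
Lemma cover_ab_move D D' : DGamma D -> DGamma D' -> arc_cover alpha beta gamma T D' D ->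
  ab_move D D'.
Proof.
move=> DD DD' [[le_D'D not_perm] no_mid].
case: (arc_le_inv le_D'D) => [perm | [D1 mv le1]]; first by rewrite perm in not_perm.
have sum_eq := DGamma_source_sum DD' DD.
have le_sum := arc_le_source_sum le1.
case: (arc_move_source_sum mv) => [ab | lt_sum]; last by lia.
have [perm_D1D | not_perm1] := boolP (perm_eq D1 D); first exact: ab_move_perm perm_D1D ab.
case: no_mid; exists D1; split.
  split; first exact: arc_le_arc_diagram le1 (proj1 DD).
  by apply/(ab_move_LR_type _ _ _ ab); case: DD'.
split; split=> //; first exact: arc_le_move.
have sD1 := arc_le_simple le1 (DGamma_simple DD).
by apply: crossings_neq_perm; rewrite neq_ltn (ab_move_crossings sD1 ab).
Qed.

Lemma ab_move_cover D D' : DGamma D -> DGamma D' -> ab_move D D' ->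
  crossings D' + 1 = crossings D -> arc_cover alpha beta gamma T D' D.
Proof.
move=> DD DD' mv cr; split.
  split; first exact/arc_le_move/ab_move_arc_move.
  by apply: crossings_neq_perm; rewrite neq_ltn; apply/orP; left; lia.
case=> D0 [DD0 [[le1 np1] [le2 np2]]].
have := arc_le_crossings le1 (DGamma_simple DD0) (DGamma_source_sum DD' DD0).
have := arc_le_crossings le2 (DGamma_simple DD) (DGamma_source_sum DD0 DD).
by rewrite (negbTE np1) (negbTE np2) => -[] // lt2 [] // lt1; lia.
Qed.

End SingleBoxRows.

Theorem mainTheorem4 (alpha beta gamma : seq nat) (T : filling)
    (D D' : arc_diagram) :
  is_partition alpha -> is_partition beta -> is_partition gamma ->
  nth 0 alpha 0 <= 2 ->
  is_LR_tableau alpha beta gamma T ->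
  (forall i, 0 < i -> conj beta i - conj gamma i <= 1) ->
  in_DGamma alpha beta gamma T D -> in_DGamma alpha beta gamma T D' ->
  arc_cover alpha beta gamma T D' D <->
  ((arc_move_of MoveA D D' \/ arc_move_of MoveB D D') /\
   crossings D' + 1 = crossings D).
Proof.
move=> _ _ _ _ _ rows DD DD'; split; last by case=> mv cr; apply: ab_move_cover.
move=> cover; have mv := cover_ab_move rows DD DD' cover.
split=> //; case: cover => _ no_mid.
exact: (ab_move_cover_crossings DD (DGamma_simple rows DD) mv no_mid).
Qed.
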